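(* Let $G$ be a graph and let $C=v_0v_1\ldots v_{n-1}$ be an induced cycle of $G$ of length $n\ge 5$ with good neighbours. For $i=0,\dots,n-1$ let $B_i$ be a biclique of $G$ containing $\{v_{i-1},v_i,v_{i+1}\}$ (indices mod $n$), and let $b_i$ be the vertex of $KB_e(G)$ corresponding to $B_i$. Then $V(B_i)\subseteq N[v_i]$ for all $i$, $C'=b_0b_1\ldots b_{n-1}$ is an induced cycle (of length $n$) of $KB_e(G)$, and $C'$ has good neighbours in $KB_e(G)$.
   Context: All graphs are finite, simple and undirected. A biclique of a graph $G$ is a maximal (with respect to inclusion) induced subgraph of $G$ that is a complete bipartite graph $K_{p,q}$ with $p,q\ge 1$. The edge-biclique graph $KB_e(G)$ has one vertex for each biclique of $G$, two distinct vertices being adjacent iff the corresponding bicliques share at least one edge. An induced cycle $C=v_0v_1\ldots v_{n-1}$ ($n\ge5$) of a graph $H$ has good neighbours (in $H$) if for every vertex $v\in V(H)\setminus V(C)$ and every $i\in\{0,\dots,n-1\}$ (indices mod $n$), $\{v_{i-1},v_{i+1}\}\subseteq N(v)$ implies $v_i\in N(v)$. $N[v]$ is the closed neighbourhood of $v$. *)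

From HB Require Import structures.
From mathcomp Require Import all_boot.
Set Implicit Arguments. Unset Strict Implicit. Unset Printing Implicit Defensive.

(* A (finite, simple, undirected) graph is a vertex finType with a symmetric,
   irreflexive adjacency relation; those two properties are hypotheses of
   the theorem. *)

Section Graphs.
Variable T : finType.
Variable e : rel T.

Definition is_cbip (B : {set T}) : bool :=
  [exists X : {set T},
    [&& X \subset B, X != set0, (B :\: X) != set0,
        [forall x in X, forall y in X, ~~ e x y],
        [forall x in B :\: X, forall y in B :\: X, ~~ e x y] &
        [forall x in X, forall y in B :\: X, e x y]]].

(* A biclique: an inclusion-maximal vertex set inducing a complete bipartite
   graph (induced subgraphs are determined by their vertex sets). *)
Definition is_biclique (B : {set T}) : bool :=
  is_cbip B && [forall B' : {set T}, (B \subset B') && is_cbip B' ==> (B' == B)].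

Definition cnbhd (v : T) : {set T} := [set w | (w == v) || e v w].

End Graphs.

(* Vertices of KB_e(G): the bicliques of G. *)
Notation biclique e := {B : {set _} | is_biclique e B}.

Definition kbe_adj (T : finType) (e : rel T) : rel (biclique e) :=
  fun b1 b2 => (b1 != b2) &&
    [exists x, exists y,
      [&& x \in val b1, y \in val b1, x \in val b2, y \in val b2 & e x y]].

Definition induced_cycle (V : finType) (adj : rel V) (n : nat)
    (v : 'I_n -> V) : Prop :=
  4 < n /\ injective v /\
  forall i j : 'I_n, adj (v i) (v j) = (j == ordS i) || (i == ordS j).

Definition good_neighbours (V : finType) (adj : rel V) (n : nat)
    (v : 'I_n -> V) : Prop :=
  forall (w : V), w \notin codom v -> forall i : 'I_n,
    adj w (v (ord_pred i)) -> adj w (v (ordS i)) -> adj w (v i).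

From HB Require Import structures.
From mathcomp Require Import all_boot.
From mathcomp Require Import zify.
Set Implicit Arguments. Unset Strict Implicit.

(* The heart of the argument is that every complete bipartite set Bs
   containing three consecutive cycle vertices v_{i-1} v_i v_{i+1} is a star
   centred at v_i: a vertex of Bs on the same side as v_i is adjacent to both
   v_{i-1} and v_{i+1}, so it is v_i itself (another cycle vertex would give a
   chord) or, by the good-neighbours hypothesis, adjacent to v_i, which the
   bipartition forbids.  Hence Bs lies in N[v_i] and every edge of Bs contains
   v_i.  From the star property we read off, for the chosen bicliques B_i,
   that v_j lies in B_i exactly when j is i or a cycle neighbour of i; that
   B_i and B_j share an edge exactly when i and j are consecutive (so the b_i
   are distinct and form an induced cycle); and that a biclique sharing edges
   with B_{i-1} and B_{i+1} contains v_i and v_{i-1}, hence an edge of B_i. *)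

Definition cyc_adj n (i j : 'I_n) : bool := (j == ordS i) || (i == ordS j).

Lemma cyc_adjC n (i j : 'I_n) : cyc_adj i j = cyc_adj j i.
Proof. by rewrite /cyc_adj orbC. Qed.

Lemma ordS_val n (i : 'I_n) : (ordS i : nat) = if i.+1 == n then 0 else i.+1.
Proof.
rewrite /=; case: ifP => [/eqP ->|h]; first by rewrite modnn.
rewrite modn_small //; have := ltn_ord i; lia.
Qed.

Lemma ord_pred_val n (i : 'I_n) :
  (ord_pred i : nat) = if (i : nat) == 0 then n.-1 else (i : nat).-1.
Proof.
have := ltn_ord i.
rewrite /=; case: ifP => [/eqP -> h|h h2]; first by rewrite add0n modn_small //; lia.
have -> : (i + n).-1 = (i : nat).-1 + n by lia.
rewrite modnDr modn_small //; lia.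
Qed.

Lemma ord_eqE n (i j : 'I_n) : (i == j) = ((i : nat) == j).
Proof. by []. Qed.

Ltac cycle_arith := rewrite /= ?ord_eqE ?ordS_val ?ord_pred_val; repeat case: ifP; lia.

Section CycleIndices.
Variable n : nat.
Hypothesis n_gt4 : 4 < n.

Lemma ord_pred_neq (i : 'I_n) : ord_pred i != i.
Proof. move: (ltn_ord i); cycle_arith. Qed.

(* v_{i-1} and v_{i+1} are not consecutive: this needs n > 3. *)
Lemma cyc_pred_succ_nonadj (i : 'I_n) : ~~ cyc_adj (ord_pred i) (ordS i).
Proof. rewrite /cyc_adj; move: (ltn_ord i); cycle_arith. Qed.

(* i is the only common cycle neighbour of i-1 and i+1: this needs n > 4. *)
Lemma cyc_common_nbr (i j : 'I_n) :
  cyc_adj j (ord_pred i) -> cyc_adj j (ordS i) -> j = i.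
Proof.
rewrite /cyc_adj => h1 h2; apply/val_inj.
by move: h1 h2 (ltn_ord i) (ltn_ord j); cycle_arith.
Qed.

Lemma cyc_closed_nbhd_triple (i j : 'I_n) :
  (j == i) || cyc_adj i j -> (ordS j == i) || cyc_adj i (ordS j) ->
  (ord_pred j == i) || cyc_adj i (ord_pred j) -> j = i.
Proof.
rewrite /cyc_adj => h1 h2 h3; apply/val_inj.
by move: h1 h2 h3 (ltn_ord i) (ltn_ord j); cycle_arith.
Qed.

End CycleIndices.

Lemma subset_triple (T : finType) (a b c : T) (S : {set T}) :
  [set a; b; c] \subset S -> [/\ a \in S, b \in S & c \in S].
Proof. by move/subsetP=> h; split; apply: h; rewrite !inE eqxx ?orbT. Qed.

Section CompleteBipartite.
Variables (T : finType) (e : rel T).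
Hypothesis e_sym : symmetric e.

Lemma cbip_sides (Bs : {set T}) : is_cbip e Bs -> exists X : {set T},
  forall x y, x \in Bs -> y \in Bs -> e x y = ((x \in X) != (y \in X)).
Proof.
case/existsP=> X /andP [_ /and5P [_ _ indepX indepY complete]].
exists X => x y hx hy.
case hxX: (x \in X); case hyX: (y \in X) => /=.
- by apply/negbTE; move/forall_inP: indepX => /(_ x hxX)/forall_inP/(_ y hyX).
- by move/forall_inP: complete => /(_ x hxX)/forall_inP; apply; rewrite inE hyX hy.
- rewrite e_sym; move/forall_inP: complete => /(_ y hyX)/forall_inP.
  by apply; rewrite inE hxX hx.
- apply/negbTE; move/forall_inP: indepY => /(_ x)/(_ _)/forall_inP/(_ y).
  by apply; rewrite inE ?hxX ?hyX ?hx ?hy.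
Qed.

Lemma cbip_parity (Bs : {set T}) (x y z : T) : is_cbip e Bs ->
  x \in Bs -> y \in Bs -> z \in Bs -> e x y -> ~~ e x z -> e y z.
Proof.
move=> /cbip_sides [X sides] hx hy hz.
rewrite !sides //; by case: (x \in X); case: (y \in X); case: (z \in X).
Qed.

End CompleteBipartite.

Section InducedCycle.
Variables (T : finType) (e : rel T).
Hypotheses (e_sym : symmetric e) (e_irr : irreflexive e).
Variables (n : nat) (v : 'I_n -> T).
Hypotheses (n_gt4 : 4 < n) (v_inj : injective v)
  (v_adj : forall i j, e (v i) (v j) = cyc_adj i j)
  (v_good : good_neighbours e v).

Lemma v_adj_pred (i : 'I_n) : e (v (ord_pred i)) (v i).
Proof. by rewrite v_adj /cyc_adj ord_predK eqxx. Qed.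

Lemma v_adj_succ (i : 'I_n) : e (v i) (v (ordS i)).
Proof. by rewrite v_adj /cyc_adj eqxx. Qed.

Lemma common_nbr (i : 'I_n) (z : T) :
  e z (v (ord_pred i)) -> e z (v (ordS i)) -> z = v i \/ e z (v i).
Proof.
case: (boolP (z \in codom v)) => [/codomP [j ->]|hz] hp hs.
  by left; congr v; apply: (cyc_common_nbr n_gt4); rewrite -v_adj.
by right; exact: v_good hz i hp hs.
Qed.

Section Star.
Variables (Bs : {set T}) (i : 'I_n).
Hypotheses (Bs_cbip : is_cbip e Bs)
  (Bs_triple : [set v (ord_pred i); v i; v (ordS i)] \subset Bs).

Lemma star_sides : exists X : {set T},
  (forall x y, x \in Bs -> y \in Bs -> e x y = ((x \in X) != (y \in X))) /\
  (forall x, x \in Bs -> (x \in X) = (v i \in X) -> x = v i).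
Proof.
have [vp vi vs] := subset_triple Bs_triple.
have [X sides] := cbip_sides e_sym Bs_cbip.
exists X; split=> // x hx same.
have hp : e x (v (ord_pred i)) by rewrite sides // same -sides // e_sym v_adj_pred.
have hs : e x (v (ordS i)) by rewrite sides // same -sides // v_adj_succ.
case: (common_nbr hp hs) => // hxi.
by move: hxi; rewrite sides // same eqxx.
Qed.

Lemma star_center (x : T) : x \in Bs -> x = v i \/ e (v i) x.
Proof.
move=> hx; have [X [sides side_vi]] := star_sides.
have [_ vi _] := subset_triple Bs_triple.
case same: ((x \in X) == (v i \in X)); first by left; apply/side_vi/eqP.
by right; rewrite sides // eq_sym same.
Qed.

Lemma star_edge (x y : T) : x \in Bs -> y \in Bs -> e x y -> x = v i \/ y = v i.
Proof.
move=> hx hy exy; have [X [sides side_vi]] := star_sides.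
have [_ vi _] := subset_triple Bs_triple.
case sx: ((x \in X) == (v i \in X)); first by left; apply/side_vi/eqP.
case sy: ((y \in X) == (v i \in X)); first by right; apply/side_vi/eqP.
move: exy sx sy; rewrite sides //.
by case: (x \in X); case: (y \in X); case: (v i \in X).
Qed.

End Star.

Section ChosenBicliques.
Variable B : 'I_n -> biclique e.
Hypothesis B_triple :
  forall i, [set v (ord_pred i); v i; v (ordS i)] \subset val (B i).

Let B_cbip (i : 'I_n) : is_cbip e (val (B i)).
Proof. by case/andP: (valP (B i)). Qed.

Lemma B_sub_cnbhd (i : 'I_n) : val (B i) \subset cnbhd e (v i).
Proof.
apply/subsetP => x hx; rewrite inE.
by case: (star_center (B_cbip i) (B_triple i) hx) => [->|->]; rewrite ?eqxx ?orbT.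
Qed.

Lemma v_in_B (i j : 'I_n) : (v j \in val (B i)) = (j == i) || cyc_adj i j.
Proof.
apply/idP/idP.
  case/(star_center (B_cbip i) (B_triple i)) => [/v_inj ->|]; first by rewrite eqxx.
  by rewrite v_adj => ->; rewrite orbT.
case/orP => [/eqP -> | /orP [] /eqP ->].
- by have [] := subset_triple (B_triple i).
- by have [] := subset_triple (B_triple i).
- by have [+ _ _] := subset_triple (B_triple (ordS j)); rewrite ordSK.
Qed.

(* The b_i are pairwise distinct, since B_i determines i through v_in_B. *)
Lemma B_inj : injective B.
Proof.
move=> i j Bij; have vB k : v k \in val (B j) = (k == i) || cyc_adj i k.
  by rewrite -Bij v_in_B.
have [vp vi vs] := subset_triple (B_triple j).
symmetry; apply: (cyc_closed_nbhd_triple n_gt4); rewrite -vB; assumption.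
Qed.

Lemma shared_edge_center (W : biclique e) (j : 'I_n) : kbe_adj W (B j) ->
  v j \in val W /\ exists2 a, a \in val W & a \in val (B j) /\ e (v j) a.
Proof.
case/andP=> _ /existsP [x /existsP [y /and5P [xW yW xj yj exy]]].
case: (star_edge (B_cbip j) (B_triple j) xj yj exy) => <-.
  exact: conj xW (ex_intro2 _ _ y yW (conj yj exy)).
have eyx : e y x by rewrite e_sym.
exact: conj yW (ex_intro2 _ _ x xW (conj xj eyx)).
Qed.

(* B_i and B_j share an edge iff i and j are consecutive on the cycle;
   together with B_inj this makes b_0 ... b_{n-1} an induced cycle. *)
Lemma B_kbe_adj (i j : 'I_n) : kbe_adj (B i) (B j) = cyc_adj i j.
Proof.
apply/idP/idP.
  move=> hij; have [vjBi _] := shared_edge_center hij.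
  have ij : i != j by apply: contraTneq hij => ->; rewrite /kbe_adj eqxx.
  by move: vjBi; rewrite v_in_B eq_sym (negbTE ij).
move=> cij; have ij : i != j by apply: contraTneq cij => ->; rewrite -v_adj e_irr.
rewrite /kbe_adj (inj_eq B_inj) ij /=.
apply/existsP; exists (v i); apply/existsP; exists (v j).
have cji : cyc_adj j i by rewrite cyc_adjC.
by rewrite !v_in_B v_adj cij cji !eqxx !orbT.
Qed.

(* A biclique W sharing edges with B_{i-1} and B_{i+1} contains v_{i-1},
   a neighbour a of it in B_{i-1}, and v_{i+1}; by the bipartition of W,
   a is adjacent to v_{i+1}, so a = v_i or a ~ v_i, and the star property of
   B_{i-1} forces v_i in W.  Then the edge v_{i-1} v_i lies in W and in B_i. *)
Lemma B_good_neighbours : good_neighbours (@kbe_adj T e) B.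
Proof.
move=> W notB i hp hs.
have WBi : W != B i by apply: contraNneq notB => ->; rewrite codom_f.
have [vpW [a aW [aBp epa]]] := shared_edge_center hp.
have [vsW _] := shared_edge_center hs.
have cbW : is_cbip e (val W) by case/andP: (valP W).
have eas : e a (v (ordS i)).
  apply: (cbip_parity e_sym cbW vpW aW vsW epa).
  by rewrite v_adj (cyc_pred_succ_nonadj n_gt4).
have viW : v i \in val W.
  have eap : e a (v (ord_pred i)) by rewrite e_sym.
  have [<-|eai] := common_nbr eap eas; first exact: aW.
  have viBp : v i \in val (B (ord_pred i)) by rewrite v_in_B /cyc_adj ord_predK eqxx orbT.
  case: (star_edge (B_cbip _) (B_triple _) aBp viBp eai) => [ap|/v_inj ip].
    by move: epa; rewrite ap e_irr.
  by move: (ord_pred_neq n_gt4 i); rewrite -ip eqxx.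
rewrite /kbe_adj WBi /=; apply/existsP; exists (v i); apply/existsP.
exists (v (ord_pred i)); rewrite viW vpW !v_in_B eqxx /cyc_adj ord_predK eqxx !orbT /=.
by rewrite e_sym v_adj_pred.
Qed.

End ChosenBicliques.
End InducedCycle.

Theorem mainTheorem9 (T : finType) (e : rel T)
    (e_sym : symmetric e) (e_irr : irreflexive e)
    (n : nat) (v : 'I_n -> T)
    (hC : induced_cycle e v) (hgood : good_neighbours e v)
    (B : 'I_n -> biclique e)
    (hB : forall i : 'I_n,
        [set v (ord_pred i); v i; v (ordS i)] \subset val (B i)) :
  (forall i : 'I_n, val (B i) \subset cnbhd e (v i)) /\
  induced_cycle (@kbe_adj T e) B /\
  good_neighbours (@kbe_adj T e) B.
Proof.
have [n_gt4 [v_inj v_adj]] := hC.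
split; first exact: (B_sub_cnbhd e_sym n_gt4 v_adj hgood hB).
split; last exact: (B_good_neighbours e_sym e_irr n_gt4 v_inj v_adj hgood hB).
split=> //; split; first exact: (B_inj e_sym n_gt4 v_inj v_adj hgood hB).
exact: (B_kbe_adj e_sym e_irr n_gt4 v_inj v_adj hgood hB).
Qed.
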